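(* Consider the multi-user private information retrieval (MUPIR) setting with $N \ge 1$ non-curious or computationally-limited databases and $U \ge 1$ trustworthy users, with $K$ messages, and let $S = N + U - 1$ denote the number of information sources. Then the capacity (supremum of achievable rates under the privacy constraints) of this setting is $$C_{\text{MUPIR}} = \Big(1 + \frac{1}{S} + \frac{1}{S^2} + \cdots + \frac{1}{S^{K-1}}\Big)^{-1}.$$
   Context: Setting (MUPIR): $N$ replicated, non-communicating databases each store the same $K$ independent messages $W_1,\dots,W_K$, each of $L$ bits, so $H(W_k)=L$ for all $k\in[K]=\{1,\dots,K\}$ and $H(W_{1:K})=KL$. A central user wishes to retrieve $W_\theta$, $\theta\in[K]$, with the help of the other $U-1$ users. The $S=N+U-1$ sources are the $N$ databases and the $U-1$ other users. The central user generates queries $Q^{[\theta]}_s$, $s\in[S]$, one per source; a query sent to a database is answered directly by that database with $A^{[\theta]}_s$, while a query sent to another user is forwarded by that user to some database and the resulting answer $A^{[\theta]}_s$ is returned to the central user. Queries are independent of the messages: $I(Q^{[k]}_{1:S};W_{1:K})=0$ for all $k\in[K]$. Privacy: for every source $s$, $(Q^{[1]}_s,A^{[1]}_s,W_{1:K})$ and $(Q^{[k]}_s,A^{[k]}_s,W_{1:K})$ are identically distributed for every $k\in[K]$. Correctness: $W_\theta$ is recoverable from all answers and queries. Writing $\sum Q$ for $Q^{[\theta]}_{1:S}$, the rate is $R = L/D = H(W_\theta)/\big(S\,H(A^{[\theta]}_1 \mid \sum Q)\big)$, where $D$ is the total number of downloaded bits; upload cost is ignored. ''Computationally-limited'' means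 a database does not cross-reference the queries of different users (it analyzes only the queries of a single user at a time). *)

From HB Require Import structures.
From mathcomp Require Import all_boot all_order all_algebra.
From mathcomp Require Import reals exp.
Unset Implicit Arguments.
Unset Strict Implicit.
Unset Printing Implicit Defensive.
Import Order.TTheory GRing.Theory Num.Theory.
Local Open Scope ring_scope.

Definition log2 {R : realType} (x : R) : R := ln x / ln 2.

Definition prob {R : realType} {O : finType} (P : O -> R) (E : pred O) : R :=
  \sum_(o | E o) P o.

Definition entropy {R : realType} {O : finType} (P : O -> R) {T : eqType}
  (X : O -> T) : R :=
  - \sum_(o : O) P o * log2 (prob P (fun o' => X o' == X o)).

Definition cond_entropy {R : realType} {O : finType} (P : O -> R)
  {T T' : eqType} (X : O -> T) (Y : O -> T') : R :=
  entropy P (fun o => (X o, Y o)) - entropy P Y.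

(* K messages of L bits each; S = N + U - 1 information sources.
   The central user's private randomness F ranges over the finite type [rnd]
   with distribution [prF]; the query to source s for desired index th is
   [query th s F] (hence queries are independent of the messages); the answer
   returned by source s is a deterministic function of its query and of the
   messages (a database answers a query it receives directly or forwarded by
   another user, looking only at that single query). *)
Record pir_scheme (R : realType) (K S L : nat) := PirScheme {
  rnd : finType;
  prF : rnd -> R;
  qry : eqType;
  ans : eqType;
  query : 'I_K -> 'I_S -> rnd -> qry;
  answer : 'I_S -> qry -> {ffun 'I_K -> L.-tuple bool} -> ans
}.
Arguments rnd {R K S L} _.
Arguments prF {R K S L} _ _.
Arguments qry {R K S L} _.
Arguments ans {R K S L} _.
Arguments query {R K S L} _ _ _ _.
Arguments answer {R K S L} _ _ _ _.

(* joint law: F ~ prF, independent of the messages W_{1:K}, which are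
   i.i.d. uniform on L-bit strings *)
Definition P0 {R : realType} {K S L : nat} (sc : pir_scheme R K S L)
  (o : (rnd sc * {ffun 'I_K -> L.-tuple bool})%type) : R :=
  prF sc o.1 / 2 ^+ (K * L).

Definition Q {R : realType} {K S L : nat} (sc : pir_scheme R K S L)
  (th : 'I_K) (s : 'I_S) (o : (rnd sc * {ffun 'I_K -> L.-tuple bool})%type) :=
  query sc th s o.1.

Definition A {R : realType} {K S L : nat} (sc : pir_scheme R K S L)
  (th : 'I_K) (s : 'I_S) (o : (rnd sc * {ffun 'I_K -> L.-tuple bool})%type) :=
  answer sc s (Q sc th s o) o.2.

Definition Qall {R : realType} {K S L : nat} (sc : pir_scheme R K S L)
  (th : 'I_K) (o : (rnd sc * {ffun 'I_K -> L.-tuple bool})%type)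
  : {ffun 'I_S -> qry sc} := [ffun s => Q sc th s o].

Definition Aall {R : realType} {K S L : nat} (sc : pir_scheme R K S L)
  (th : 'I_K) (o : (rnd sc * {ffun 'I_K -> L.-tuple bool})%type)
  : {ffun 'I_S -> ans sc} := [ffun s => A sc th s o].

Definition valid_dist {R : realType} {K S L : nat} (sc : pir_scheme R K S L) :=
  (forall f, 0 <= prF sc f) /\ \sum_(f : rnd sc) prF sc f = 1.

Definition correct {R : realType} {K S L : nat} (sc : pir_scheme R K S L) :=
  forall th : 'I_K,
  exists dec : {ffun 'I_S -> qry sc} -> {ffun 'I_S -> ans sc} -> L.-tuple bool,
  forall o, 0 < P0 sc o -> dec (Qall sc th o) (Aall sc th o) = o.2 th.

Definition private {R : realType} {K S L : nat} (sc : pir_scheme R K S L) :=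
  forall (s : 'I_S) (k k' : 'I_K) (q : qry sc) (a : ans sc)
         (w : {ffun 'I_K -> L.-tuple bool}),
  prob (P0 sc) (fun o => [&& Q sc k s o == q, A sc k s o == a & o.2 == w]) =
  prob (P0 sc) (fun o => [&& Q sc k' s o == q, A sc k' s o == a & o.2 == w]).

Definition download {R : realType} {K S L : nat} (sc : pir_scheme R K S L)
  (th : 'I_K) : R :=
  \sum_(s < S) cond_entropy (P0 sc) (A sc th s) (Qall sc th).

Definition achievable {R : realType} (K S : nat) (r : R) : Prop :=
  exists (L : nat) (sc : pir_scheme R K S L),
    [/\ (0 < L)%N, valid_dist sc, correct sc, private sc &
        forall th : 'I_K, r * download sc th <= L%:R].

Definition is_capacity {R : realType} (K S : nat) (C : R) : Prop :=
  (forall r : R, achievable K S r -> r <= C) /\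
  (forall e : R, 0 < e -> exists r : R, achievable K S r /\ C - e < r).

From HB Require Import structures.
From mathcomp Require Import all_boot all_order all_algebra perm.
From mathcomp Require Import reals exp.
From mathcomp Require Import ring lra.
Set Implicit Arguments.
Unset Strict Implicit.
Unset Printing Implicit Defensive.
Import Order.TTheory GRing.Theory Num.Theory.
Local Open Scope ring_scope.

(* Converse (the argument of Sun and Jafar): write cond_answers j th for the
   entropy of all answers for the desired index th given all queries and the
   messages W_i, i < j.  Correctness gives
   cond_answers k k = L + cond_answers (k+1) k.  Since queries are independent
   of the messages and each answer is a function of its own query and of the
   messages, conditioning one answer on all queries is the same as conditioning
   it on its own query; privacy then lets one change the desired index of that
   answer, and subadditivity gives cond_answers j k' <= S * cond_answers j k.
   Iterating from k = 0 yields L * (1 + 1/S + ... + 1/S^(K-1)) <= D.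
   Achievability, for S >= 2: take L = S - 1 and a uniform f : [K] -> Z_S;
   source s returns the XOR over k of bit f_k (+ s if k = th) of W_k, bit 0
   being the constant 0.  The answers of sources i+1-f_th and -f_th differ
   exactly in bit i of W_th, and an answer is a fair coin unless its query is
   identically 0, which has probability S^-K; hence D = S (1 - S^-K), which is
   L times the sum above.  For S = 1 the single source returns all messages. *)

Section Log2.
Context {R : realType}.

Lemma ln2_gt0 : 0 < ln (2 : R).
Proof. by apply: ln_gt0; lra. Qed.

Lemma log2M (a b : R) : 0 < a -> 0 < b -> log2 (a * b) = log2 a + log2 b.
Proof. by move=> a0 b0; rewrite /log2 lnM ?posrE // mulrDl. Qed.

Lemma log2V (a : R) : 0 < a -> log2 a^-1 = - log2 a.
Proof. by move=> a0; rewrite /log2 lnV ?posrE // mulNr. Qed.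

Lemma log2_div (a b : R) : 0 < a -> 0 < b -> log2 (a / b) = log2 a - log2 b.
Proof. by move=> a0 b0; rewrite log2M ?invr_gt0 // log2V. Qed.

Lemma ler_log2 (a b : R) : 0 < a -> a <= b -> log2 a <= log2 b.
Proof.
move=> a0 ab; rewrite /log2 ler_pM2r ?invr_gt0 ?ln2_gt0 //.
by rewrite ler_ln ?posrE // (lt_le_trans a0).
Qed.

Lemma log2_exp2 n : log2 ((2 : R) ^+ n) = n%:R.
Proof.
rewrite /log2 lnXn; last by lra.
by rewrite -[ln 2 *+ n]mulr_natl mulfK // gt_eqF // ln2_gt0.
Qed.

Lemma ln_le_subr1 (x : R) : 0 < x -> ln x <= x - 1.
Proof. by move=> x0; rewrite -[x in ln x](subrKC 1) le_ln1Dx // ltrBrDl; lra. Qed.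

Lemma exp2_gt0 n : 0 < (2 : R) ^+ n.
Proof. by apply: exprn_gt0; lra. Qed.

End Log2.

Lemma geometric_sum (F : fieldType) (x : F) K : x != 0 ->
  (\sum_(i < K) x ^- i) * (x - 1) = x * (1 - x ^- K).
Proof.
move=> x_neq0; elim: K => [|K IHK]; first by rewrite big_ord0 expr0 invr1 subrr mulr0 mul0r.
rewrite big_ord_recr /= mulrDl IHK exprSr.
by field; rewrite x_neq0 expf_neq0.
Qed.

Lemma sumr_exprN_ge1 (R : realFieldType) (x : R) K : (0 < K)%N -> 0 <= x ->
  1 <= \sum_(i < K) x ^- i.
Proof.
move=> K_gt0 x_ge0; rewrite (bigD1 (Ordinal K_gt0)) //= expr0 invr1 lerDl.
by apply: sumr_ge0 => i _; rewrite invr_ge0 exprn_ge0.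
Qed.

Lemma eq_prob (R : realType) (O : finType) (P : O -> R) (E E' : pred O) :
  E =1 E' -> prob P E = prob P E'.
Proof. by move=> eE; apply: eq_bigl. Qed.

Lemma eq_ffun_ord_recl (T : eqType) n (f g : 'I_n.+1 -> T) :
  ([ffun i => f i] == [ffun i => g i]) =
  (f ord0 == g ord0) && ([ffun i => f (lift ord0 i)] == [ffun i => g (lift ord0 i)]).
Proof.
apply/eqP/andP => [/ffunP fg | [/eqP fg0 /eqP/ffunP fg]].
  by split; [move: (fg ord0) | apply/eqP/ffunP => i; move: (fg (lift ord0 i))];
    rewrite !ffunE => ->.
apply/ffunP => i; rewrite !ffunE.
by case: (unliftP ord0 i) => [j ->|->] //; move: (fg j); rewrite !ffunE.
Qed.

Section Entropy.
Variables (R : realType) (O : finType) (P : O -> R).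
Hypothesis P_ge0 : forall o, 0 <= P o.

Definition pr {T : eqType} (X : O -> T) (o : O) : R :=
  prob P (fun o' => X o' == X o).

Definition cond_pr {T T' : eqType} (X : O -> T) (Y : O -> T') (o : O) : R :=
  pr (fun o => (X o, Y o)) o / pr Y o.

Lemma prob_ge0 (E : pred O) : 0 <= prob P E.
Proof. exact: sumr_ge0. Qed.

Lemma prob_expect (E : pred O) : prob P E = \sum_o P o * (E o)%:R.
Proof.
by rewrite /prob big_mkcond; apply: eq_bigr => o _; case: (E o); rewrite ?mulr1 ?mulr0.
Qed.

Lemma le_prob (E E' : pred O) : (forall o, E o -> E' o) -> prob P E <= prob P E'.
Proof.
move=> sEE'; rewrite /prob [leLHS]big_mkcond [leRHS]big_mkcond /=.
apply: ler_sum => o _; case: ifP => [/sEE' -> // | _].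
by case: ifP.
Qed.

Lemma P_le_pr (T : eqType) (X : O -> T) o : P o <= pr X o.
Proof. by rewrite /pr /prob (bigD1 o) //= lerDl prob_ge0. Qed.

Lemma pr_gt0 (T : eqType) (X : O -> T) o : 0 < P o -> 0 < pr X o.
Proof. by move=> Po; apply: lt_le_trans Po _; apply: P_le_pr. Qed.

Lemma ler_expect (f g : O -> R) : (forall o, 0 < P o -> f o <= g o) ->
  \sum_o P o * f o <= \sum_o P o * g o.
Proof.
move=> fg; apply: ler_sum => o _; have := P_ge0 o.
by rewrite le0r => /predU1P[->|/[dup] Po /fg]; rewrite ?mul0r // => /ler_wpM2l->.
Qed.

Lemma eq_expect (f g : O -> R) : (forall o, 0 < P o -> f o = g o) ->
  \sum_o P o * f o = \sum_o P o * g o.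
Proof. by move=> fg; apply/le_anti; rewrite !ler_expect // => o /fg ->. Qed.

Lemma eq_entropy_supp (T T' : eqType) (X : O -> T) (X' : O -> T') :
  (forall o o', 0 < P o -> 0 < P o' -> (X o' == X o) = (X' o' == X' o)) ->
  entropy P X = entropy P X'.
Proof.
move=> XX'; rewrite /entropy; congr (- _); apply: eq_expect => o Po.
congr log2; rewrite /prob [LHS]big_mkcond [RHS]big_mkcond /=.
apply: eq_bigr => o' _; have := P_ge0 o'.
by rewrite le0r => /predU1P[->|Po']; rewrite ?if_same ?XX'.
Qed.

Lemma eq_entropy (T T' : eqType) (X : O -> T) (X' : O -> T') :
  (forall o o', (X o' == X o) = (X' o' == X' o)) -> entropy P X = entropy P X'.
Proof. by move=> XX'; apply: eq_entropy_supp => o o' _ _. Qed.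

Lemma eq_cond_entropy_pattern (T1 T2 T3 T4 : eqType) (X : O -> T1) (Y : O -> T2)
    (X' : O -> T3) (Y' : O -> T4) :
  (forall o o', (X o' == X o) = (X' o' == X' o)) ->
  (forall o o', (Y o' == Y o) = (Y' o' == Y' o)) ->
  cond_entropy P X Y = cond_entropy P X' Y'.
Proof.
move=> XX' YY'; rewrite /cond_entropy (eq_entropy YY'); congr (_ - _).
by apply: eq_entropy => o o'; rewrite !xpair_eqE XX' YY'.
Qed.

Lemma cond_entropyE (T T' : eqType) (X : O -> T) (Y : O -> T') :
  cond_entropy P X Y = - \sum_o P o * log2 (cond_pr X Y o).
Proof.
rewrite /cond_entropy /entropy opprK addrC -opprB -sumrB; congr (- _).
under eq_bigr do rewrite -mulrBr.
by apply: eq_expect => o Po; rewrite /cond_pr log2_div ?pr_gt0.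
Qed.

Lemma eq_cond_entropy (T1 T2 T3 T4 : eqType) (X : O -> T1) (Y : O -> T2)
    (X' : O -> T3) (Y' : O -> T4) :
  (forall o, 0 < P o -> cond_pr X Y o = cond_pr X' Y' o) ->
  cond_entropy P X Y = cond_entropy P X' Y'.
Proof. by move=> XY; rewrite !cond_entropyE; congr (- _); apply: eq_expect => o /XY ->. Qed.

Lemma entropy_pair_ge (T T' : eqType) (X : O -> T) (Y : O -> T') :
  entropy P Y <= entropy P (fun o => (X o, Y o)).
Proof.
rewrite /entropy lerN2; apply: ler_expect => o Po.
apply: ler_log2; first exact: pr_gt0.
by apply: le_prob => o'; rewrite /= xpair_eqE => /andP[].
Qed.

Lemma cond_entropy_ge0 (T T' : eqType) (X : O -> T) (Y : O -> T') :
  0 <= cond_entropy P X Y.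
Proof. by rewrite subr_ge0 entropy_pair_ge. Qed.

Lemma le_cond_entropy_fun (T T' T'' : eqType) (X : O -> T) (X' : O -> T')
    (Z : O -> T'') :
  (forall o o', X' o' = X' o -> X o' = X o) ->
  cond_entropy P X Z <= cond_entropy P X' Z.
Proof.
move=> XX'; rewrite lerD2r.
suff -> : entropy P (fun o => (X' o, Z o)) =
          entropy P (fun o => (X' o, (X o, Z o))) by apply: entropy_pair_ge.
apply: eq_entropy => o o'; rewrite !xpair_eqE.
by case: (X' o' =P X' o) => [/XX' ->|]; rewrite ?eqxx.
Qed.

Lemma gibbs (r : O -> R) : (forall o, 0 < P o -> 0 < r o) ->
  \sum_o P o * r o <= \sum_o P o -> \sum_o P o * log2 (r o) <= 0.
Proof.
move=> r_gt0 Pr_le; rewrite -subr_le0 -sumrB in Pr_le.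
suff : \sum_o P o * ln (r o) <= 0.
  move=> Pln_le; rewrite /log2; under eq_bigr do rewrite mulrA.
  by rewrite -mulr_suml pmulr_lle0 ?invr_gt0 ?ln2_gt0.
apply: le_trans Pr_le; under [X in _ <= X]eq_bigr do rewrite -[X in _ - X]mulr1 -mulrBr.
by apply: ler_expect => o Po; apply: ln_le_subr1; apply: r_gt0.
Qed.

Lemma sum_class_div_pr_le1 (T : eqType) (X : O -> T) (x : T) :
  \sum_(o | X o == x) P o / pr X o <= 1.
Proof.
have [o0 Xo0|noX] := pickP (fun o => X o == x); last first.
  by rewrite big_pred0 ?ler01.
have eq_pr o : X o == x -> pr X o = pr X o0.
  by rewrite /pr => /eqP Xo; rewrite Xo (eqP Xo0).
rewrite (eq_bigr (fun o => P o / pr X o0)) => [|o /eq_pr ->] //.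
rewrite -mulr_suml; have [-> | pr0] := eqVneq (pr X o0) 0; first by rewrite invr0 mulr0 ler01.
by rewrite /pr (eqP Xo0) in pr0 *; rewrite divff.
Qed.

Lemma sum_mul_pr (T : eqType) (Y : O -> T) (E : pred O) (f : O -> R) :
  \sum_(o | E o) P o * pr Y o * f o =
  \sum_o' P o' * \sum_(o | E o && (Y o == Y o')) P o * f o.
Proof.
transitivity (\sum_(o | E o) \sum_o' (if Y o' == Y o then P o' * (P o * f o) else 0)).
  apply: eq_bigr => o _; rewrite mulrAC mulrC /pr /prob big_mkcond mulr_suml.
  by apply: eq_bigr => o' _; case: ifP; rewrite ?mul0r.
rewrite exchange_big; apply: eq_bigr => o' _; rewrite big_mkcondr mulr_sumr.
by apply: eq_bigr => o _; rewrite eq_sym; case: ifP; rewrite ?mulr0.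
Qed.

Section Submodularity.
Variables (T1 T2 T3 : eqType) (X : O -> T1) (Y : O -> T2) (Z : O -> T3).
Let XZ o := (X o, Z o).
Let YZ o := (Y o, Z o).
Let XYZ o := (X o, (Y o, Z o)).

(* Inside the (x, z)-class of o', the y-classes are disjoint parts of the
   z-class of o', and each contributes p(y, z) at most once. *)
Lemma sum_slice_le o' :
  \sum_(o | XZ o == XZ o') P o * pr YZ o / pr XYZ o <= pr Z o'.
Proof.
rewrite sum_mul_pr /pr /prob [leRHS]big_mkcond; apply: ler_sum => o'' _ /=.
have [Zo''|Zo''] := eqVneq (Z o'') (Z o'); last first.
  rewrite big1 ?mulr0 // => o; rewrite /XZ /YZ !xpair_eqE.
  by case/andP=> /andP[_ /eqP->] /andP[_ /eqP Zo]; rewrite Zo eqxx in Zo''.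
rewrite -[leRHS]mulr1 ler_wpM2l //.
apply: le_trans (sum_class_div_pr_le1 XYZ (X o', (Y o'', Z o'))).
rewrite le_eqVlt; apply/orP; left; apply/eqP/eq_bigl => o.
rewrite /XZ /YZ /XYZ !xpair_eqE Zo''.
by case: (X o == _); case: (Y o == _); case: (Z o == _).
Qed.

Lemma sum_submod_ratio_le :
  \sum_o P o * (pr XZ o * pr YZ o / (pr XYZ o * pr Z o)) <= \sum_o P o.
Proof.
under eq_bigr do rewrite !mulrA -mulrA.
rewrite sum_mul_pr; under [leRHS]eq_bigr do rewrite -[P _]mulr1.
apply: ler_expect => o' Po'.
rewrite (eq_bigr (fun o => P o * pr YZ o / pr XYZ o / pr Z o')) => [|o /andP[_]]; last first.
  by rewrite /XZ xpair_eqE => /andP[_ /eqP Zo]; rewrite /pr Zo invfM !mulrA.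
by rewrite -mulr_suml ler_pdivrMr ?mul1r ?sum_slice_le ?pr_gt0.
Qed.

Lemma entropy_submod :
  entropy P XYZ + entropy P Z <= entropy P XZ + entropy P YZ.
Proof.
pose r o := pr XZ o * pr YZ o / (pr XYZ o * pr Z o).
have r_gt0 o : 0 < P o -> 0 < r o by move=> Po; rewrite !(mulr_gt0, invr_gt0, pr_gt0).
rewrite -subr_le0 opprD addrA.
suff -> : entropy P XYZ + entropy P Z - entropy P XZ - entropy P YZ =
          \sum_o P o * log2 (r o) by apply: gibbs sum_submod_ratio_le.
transitivity (\sum_o (P o * log2 (pr XZ o) + P o * log2 (pr YZ o) -
                      P o * log2 (pr XYZ o) - P o * log2 (pr Z o))).
  by rewrite !sumrB big_split /= /entropy /pr; ring.
under eq_bigr do rewrite -mulrDr -!mulrBr.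
apply: eq_expect => o Po.
by rewrite /r log2_div ?log2M ?mulr_gt0 ?pr_gt0 //; ring.
Qed.
End Submodularity.

Lemma cond_entropy_pair_le (T1 T2 T3 : eqType) (X : O -> T1) (Y : O -> T2)
    (Z : O -> T3) :
  cond_entropy P (fun o => (X o, Y o)) Z <= cond_entropy P X Z + cond_entropy P Y Z.
Proof.
have := entropy_submod X Y Z; rewrite /cond_entropy /=.
suff -> : entropy P (fun o => (X o, Y o, Z o)) =
          entropy P (fun o => (X o, (Y o, Z o))) by lra.
by apply: eq_entropy => o o'; rewrite !xpair_eqE andbA.
Qed.

Lemma cond_entropy_ffun_le (T T' : eqType) n (X : 'I_n -> O -> T) (Z : O -> T') :
  cond_entropy P (fun o => [ffun i => X i o]) Z <= \sum_(i < n) cond_entropy P (X i) Z.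
Proof.
elim: n X => [|n IHn] X.
  rewrite big_ord0 /cond_entropy subr_le0 le_eqVlt; apply/orP; left.
  apply/eqP/eq_entropy => o o'; rewrite xpair_eqE.
  have -> : [ffun i => X i o'] = [ffun i => X i o] by apply/ffunP => -[].
  by rewrite eqxx.
have -> : cond_entropy P (fun o => [ffun i => X i o]) Z =
          cond_entropy P (fun o => (X ord0 o, [ffun i => X (lift ord0 i) o])) Z.
  by apply: eq_cond_entropy_pattern => // o o'; rewrite xpair_eqE eq_ffun_ord_recl.
by rewrite big_ord_recl; apply: le_trans (cond_entropy_pair_le _ _ _) _; rewrite lerD2l.
Qed.

Lemma eq_expect_law (T : eqType) (V1 V2 : O -> T) :
  (forall v, prob P (fun o => V1 o == v) = prob P (fun o => V2 o == v)) ->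
  forall phi : T -> R, \sum_o P o * phi (V1 o) = \sum_o P o * phi (V2 o).
Proof.
move=> V12 phi; pose vs := undup (map V1 (enum O) ++ map V2 (enum O)).
suff regroup V : (forall o, V o \in vs) ->
    \sum_o P o * phi (V o) = \sum_(v <- vs) prob P (fun o => V o == v) * phi v.
  rewrite !regroup => [|o|o]; rewrite ?mem_undup ?mem_cat ?map_f ?mem_enum ?orbT //.
  by apply: eq_bigr => v _; rewrite V12.
move=> Vvs; transitivity (\sum_o \sum_(v <- vs) if V o == v then P o * phi v else 0).
  apply: eq_bigr => o _; rewrite (bigD1_seq (V o)) ?undup_uniq //= eqxx big1 ?addr0 //.
  by move=> v /negbTE; rewrite eq_sym => ->.
rewrite exchange_big; apply: eq_bigr => v _; rewrite /prob [in RHS]big_mkcond mulr_suml.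
by apply: eq_bigr => o _; case: ifP; rewrite ?mul0r.
Qed.

Lemma eq_entropy_law (T T' : eqType) (V1 V2 : O -> T) (g : T -> T') :
  (forall v, prob P (fun o => V1 o == v) = prob P (fun o => V2 o == v)) ->
  entropy P (fun o => g (V1 o)) = entropy P (fun o => g (V2 o)).
Proof.
move=> V12; pose psi V v := prob P (fun o => g (V o) == g v).
have psi12 v : psi V1 v = psi V2 v.
  by rewrite /psi !prob_expect (eq_expect_law V12 (fun v' => (g v' == g v)%:R)).
rewrite /entropy; congr (- _).
transitivity (\sum_o P o * log2 (psi V1 (V1 o))) => //.
rewrite (eq_expect_law V12 (fun v => log2 (psi V1 v))).
by under eq_bigr do rewrite psi12.
Qed.

End Entropy.

Section Messages.
Context {R : realType} (K L : nat).
Local Notation msgs := {ffun 'I_K -> L.-tuple bool}.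

Definition msg_count (E : pred msgs) : R := \sum_(W | E W) 1.

Lemma sum_msgs_1 : \sum_(W : msgs) (1 : R) = 2 ^+ (K * L).
Proof.
rewrite sumr_const card_ffun card_tuple card_bool card_ord -expnM mulnC.
by rewrite natrX.
Qed.

Lemma msg_count_gt0 (E : pred msgs) W : E W -> 0 < msg_count E.
Proof. by move=> EW; rewrite /msg_count (bigD1 W) //= ltr_pwDl ?sumr_ge0. Qed.

Lemma msg_count_coord (k : 'I_K) (w : L.-tuple bool) (E : pred msgs) :
  (forall W W' : msgs, (forall i, i != k -> W i = W' i) -> E W = E W') ->
  msg_count (fun W => (W k == w) && E W) * 2 ^+ L = msg_count E.
Proof.
move=> E_k.
have count_eq t : msg_count (fun W => (W k == t) && E W) =
                  msg_count (fun W => (W k == w) && E W).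
  pose sw (W : msgs) : msgs := [ffun i => if i == k then tperm w t (W i) else W i].
  have swK : involutive sw.
    by move=> W; apply/ffunP => i; rewrite !ffunE; case: eqP => // ->; rewrite tpermK.
  rewrite /msg_count (reindex_inj (inv_inj swK)) /=; apply: eq_bigl => W.
  rewrite ffunE eqxx -[X in _ == X](tpermL w t) (inj_eq perm_inj).
  by congr andb; apply: E_k => i /negbTE ki; rewrite ffunE ki.
transitivity (\sum_(t : L.-tuple bool) msg_count (fun W => (W k == t) && E W)).
  rewrite (eq_bigr _ (fun t _ => count_eq t)) sumr_const card_tuple card_bool.
  by rewrite -[in RHS]mulr_natr natrX.
rewrite /msg_count (exchange_big_dep E) /= => [|t W _ /andP[] //].
by apply: eq_bigr => W EW; rewrite (big_pred1 (W k)) // => t; rewrite EW andbT eq_sym.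
Qed.

Lemma msg_count_balanced (b : msgs -> bool) (fl : msgs -> msgs) :
  involutive fl -> (forall W, b (fl W) = ~~ b W) ->
  forall a, msg_count (fun W => b W == a) * 2 = 2 ^+ (K * L).
Proof.
move=> flK b_fl a; rewrite -sum_msgs_1 mulr_natr mulr2n (bigID (fun W => b W == a)) /=.
congr (_ + _); rewrite /msg_count (reindex_inj (inv_inj flK)) /=.
by apply: eq_bigl => W; rewrite b_fl; case: a; case: (b W).
Qed.

Definition msg_prefix (k : nat) (W : msgs) : {ffun 'I_K -> option (L.-tuple bool)} :=
  [ffun i : 'I_K => if (i < k)%N then Some (W i) else None].

Lemma eq_msg_prefixS (k : 'I_K) (W W' : msgs) :
  (msg_prefix k.+1 W' == msg_prefix k.+1 W) =
  (msg_prefix k W' == msg_prefix k W) && (W' k == W k).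
Proof.
apply/eqP/andP => [/ffunP WW'|[/eqP/ffunP WW' /eqP WWk]].
  split; last by move: (WW' k); rewrite !ffunE ltnSn => -[->].
  apply/eqP/ffunP => i; rewrite !ffunE; case: ifP => // ik.
  by move: (WW' i); rewrite !ffunE ltnS (ltnW ik).
apply/ffunP => i; rewrite !ffunE ltnS leq_eqVlt.
have [/val_inj -> | _] /= := eqVneq (val i) (val k); first by rewrite WWk.
by move: (WW' i); rewrite !ffunE.
Qed.

End Messages.

Section Scheme.
Variables (R : realType) (K S L : nat) (sc : pir_scheme R K S L).
Hypothesis sc_dist : valid_dist sc.
Local Notation msgs := {ffun 'I_K -> L.-tuple bool}.
Local Notation P := (P0 sc).

Lemma P0_ge0 o : 0 <= P o.
Proof. by rewrite divr_ge0 ?(ltW (exp2_gt0 _)) //; case: sc_dist. Qed.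

Lemma prob_P0_indep (E1 : pred (rnd sc)) (E2 : pred msgs) :
  prob P (fun o => E1 o.1 && E2 o.2) =
  (\sum_(f | E1 f) prF sc f) * (msg_count E2 / 2 ^+ (K * L)).
Proof.
rewrite /prob /P0 -(pair_big E1 E2 (fun f W => prF sc f / 2 ^+ (K * L))) /=.
rewrite mulr_suml; apply: eq_bigr => f _.
by rewrite /msg_count mulr_suml mulr_sumr; apply: eq_bigr => W _; rewrite mul1r.
Qed.

Lemma P0_sum1 : \sum_o P o = 1.
Proof.
have := prob_P0_indep predT predT; rewrite /prob /= => ->.
case: sc_dist => _ ->; rewrite mul1r /msg_count sum_msgs_1 divff //.
by rewrite gt_eqF ?exp2_gt0.
Qed.

Lemma cond_pr_indep (T T' T'' : eqType) (X : _ -> T) (Y : rnd sc -> T')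
    (Phi : msgs -> T'') (g : T' -> msgs -> T) :
  (forall o, X o = g (Y o.1) o.2) -> forall o, 0 < P o ->
  cond_pr P X (fun o => (Phi o.2, Y o.1)) o =
  msg_count (fun W => (g (Y o.1) W == X o) && (Phi W == Phi o.2)) /
  msg_count (fun W => Phi W == Phi o.2).
Proof.
move=> XgY o Po; rewrite /cond_pr /pr.
rewrite (eq_prob _ (E' := fun o' => (Y o'.1 == Y o.1) &&
    ((g (Y o.1) o'.2 == X o) && (Phi o'.2 == Phi o.2)))); last first.
  by move=> o' /=; rewrite !xpair_eqE XgY; case: (Y o'.1 =P Y o.1) => [->|];
    rewrite ?andbT ?andbF.
rewrite [X in _ / X](eq_prob _ (E' := fun o' => (Y o'.1 == Y o.1) && (Phi o'.2 == Phi o.2)));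
  last by move=> o' /=; rewrite !xpair_eqE andbC.
rewrite (prob_P0_indep (fun f => Y f == Y o.1)
    (fun W => (g (Y o.1) W == X o) && (Phi W == Phi o.2))).
rewrite (prob_P0_indep (fun f => Y f == Y o.1) (fun W => Phi W == Phi o.2)).
have prF_gt0 : 0 < \sum_(f | Y f == Y o.1) prF sc f.
  rewrite (bigD1 o.1) //= ltr_pwDl //; last by apply: sumr_ge0; case: sc_dist.
  by move: Po; rewrite /P0 pmulr_lgt0 ?invr_gt0 ?exp2_gt0.
have := exp2_gt0 (R := R) (K * L).
have := msg_count_gt0 (R := R) (E := fun W => Phi W == Phi o.2) (eqxx (Phi o.2)).
by move=> *; field; rewrite !gt_eqF.
Qed.

Lemma cond_entropy_indep (T T' : eqType) (X : _ -> T) (Y : rnd sc -> T')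
    (g : T' -> msgs -> T) :
  (forall o, X o = g (Y o.1) o.2) ->
  cond_entropy P X (fun o => Y o.1) =
  - \sum_o P o * log2 (msg_count (fun W => g (Y o.1) W == X o) / 2 ^+ (K * L)).
Proof.
move=> XgY; rewrite (eq_cond_entropy_pattern P0_ge0 (X' := X) (Y' := fun o => (tt, Y o.1))) //.
rewrite (cond_entropyE P0_ge0); congr (- _); apply: (eq_expect P0_ge0) => o Po.
rewrite (cond_pr_indep (fun _ => tt) (g := g)) //.
congr (log2 (_ / _)); first by apply: eq_bigl => W; rewrite andbT.
by rewrite -sum_msgs_1; apply: eq_bigl.
Qed.

Lemma cond_entropy_own_query (T : eqType) (Phi : msgs -> T) th s :
  cond_entropy P (A sc th s) (fun o => (Phi o.2, Qall sc th o)) =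
  cond_entropy P (A sc th s) (fun o => (Phi o.2, Q sc th s o)).
Proof.
apply: (eq_cond_entropy P0_ge0) => o Po.
rewrite (cond_pr_indep Phi (Y := fun f => [ffun s => query sc th s f])
           (g := fun q W => answer sc s (q s) W)) => [|o'|//]; last by rewrite ffunE.
by rewrite (cond_pr_indep Phi (Y := query sc th s) (g := answer sc s)) // ffunE.
Qed.

Lemma cond_entropy_private (T : eqType) (Phi : msgs -> T) k k' s : private sc ->
  cond_entropy P (A sc k s) (fun o => (Phi o.2, Q sc k s o)) =
  cond_entropy P (A sc k' s) (fun o => (Phi o.2, Q sc k' s o)).
Proof.
move=> sc_private; pose V k o := (Q sc k s o, (A sc k s o, o.2)).
have lawV v : prob P (fun o => V k o == v) = prob P (fun o => V k' o == v).
  by case: v => q [a w]; apply: sc_private.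
have e1 := eq_entropy_law (fun v => (v.2.1, (Phi v.2.2, v.1))) lawV.
have e2 := eq_entropy_law (fun v => (Phi v.2.2, v.1)) lawV.
by rewrite /cond_entropy; simpl in e1, e2; rewrite e1 e2.
Qed.

Lemma cond_entropy_next_msg th (k : 'I_K) :
  cond_entropy P (fun o => o.2 k) (fun o => (msg_prefix k o.2, Qall sc th o)) = L%:R.
Proof.
rewrite (cond_entropyE P0_ge0).
transitivity (- \sum_o P o * (- L%:R)); last by rewrite -mulr_suml P0_sum1 mul1r opprK.
congr (- _); apply: (eq_expect P0_ge0) => o Po.
rewrite (cond_pr_indep (msg_prefix k) (Y := fun f => [ffun s => query sc th s f])
           (g := fun _ W => W k)) //.
rewrite -(msg_count_coord (k := k) (o.2 k) (E := fun W => msg_prefix k W == msg_prefix k o.2)).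
  rewrite invfM mulrA mulfV ?mul1r; last first.
    by apply/lt0r_neq0/(msg_count_gt0 (W := o.2)); rewrite !eqxx.
  by rewrite log2V ?exp2_gt0 // log2_exp2.
move=> W W' WW'; congr (_ == _); apply/ffunP => i; rewrite !ffunE.
by case: ifP => // ik; rewrite WW' // -(inj_eq val_inj) /= ltn_eqF.
Qed.

Definition cond_answers (k : nat) (th : 'I_K) : R :=
  cond_entropy P (Aall sc th) (fun o => (msg_prefix k o.2, Qall sc th o)).

Lemma cond_answers_ge0 k th : 0 <= cond_answers k th.
Proof. exact: (cond_entropy_ge0 P0_ge0). Qed.

Lemma cond_answers_correct (k : 'I_K) : correct sc ->
  cond_answers k k = L%:R + cond_answers k.+1 k.
Proof.
case/(_ k) => dec decE; rewrite /cond_answers /cond_entropy.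
have -> : entropy P (fun o => (Aall sc k o, (msg_prefix k o.2, Qall sc k o))) =
          entropy P (fun o => (Aall sc k o, (msg_prefix k.+1 o.2, Qall sc k o))).
  apply: (eq_entropy_supp P0_ge0) => o o' Po Po'.
  rewrite !xpair_eqE eq_msg_prefixS.
  case: (Aall sc k o' =P Aall sc k o) => //= AA.
  case: (Qall sc k o' =P Qall sc k o) => QQ; rewrite ?andbF ?andbT //.
  by rewrite -(decE o' Po') -(decE o Po) AA QQ eqxx andbT.
have := cond_entropy_next_msg k k; rewrite /cond_entropy.
have -> : entropy P (fun o => (msg_prefix k.+1 o.2, Qall sc k o)) =
          entropy P (fun o => (o.2 k, (msg_prefix k o.2, Qall sc k o))).
  apply: (eq_entropy P0_ge0) => o o'.
  by rewrite !xpair_eqE eq_msg_prefixS; case: (_ == _); case: (_ == _).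
lra.
Qed.

Lemma cond_answers_private j k k' : private sc ->
  cond_answers j k' <= S%:R * cond_answers j k.
Proof.
move=> sc_private.
apply: le_trans (cond_entropy_ffun_le P0_ge0 (fun s => A sc k' s) _) _.
have -> : S%:R * cond_answers j k = \sum_(s < S) cond_answers j k.
  by rewrite sumr_const card_ord mulr_natl.
apply: ler_sum => s _.
rewrite cond_entropy_own_query (cond_entropy_private _ _ k) // -cond_entropy_own_query.
by apply: (le_cond_entropy_fun P0_ge0) => o o' /ffunP/(_ s); rewrite !ffunE.
Qed.

Lemma cond_answers0_le_download th : cond_answers 0 th <= download sc th.
Proof.
suff -> : cond_answers 0 th = cond_entropy P (Aall sc th) (Qall sc th).
  exact: (cond_entropy_ffun_le P0_ge0 (fun s => A sc th s)).
apply: (eq_cond_entropy_pattern P0_ge0) => // o o'.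
suff -> : msg_prefix 0 o'.2 = msg_prefix 0 o.2 by rewrite xpair_eqE eqxx.
by apply/ffunP => i; rewrite !ffunE.
Qed.

Lemma cond_answers_lower_bound n (k : 'I_K) :
  correct sc -> private sc -> (0 < S)%N -> (k + n.+1)%N = K ->
  L%:R * \sum_(i < n.+1) S%:R ^- i <= cond_answers k k.
Proof.
move=> sc_correct sc_private S_gt0; elim: n k => [|n IHn] k kn.
  by rewrite big_ord1 expr0 invr1 mulr1 cond_answers_correct // lerDl cond_answers_ge0.
have k1_lt : (k.+1 < K)%N by apply: leq_trans (leq_addr n k.+2) _; rewrite !addSnnS kn.
have h1 := IHn (Ordinal k1_lt) (etrans (addSnnS k n.+1) kn).
have h2 := cond_answers_private k.+1 k (Ordinal k1_lt) sc_private.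
rewrite cond_answers_correct // big_ord_recl expr0 invr1.
have -> : \sum_(i < n.+1) (S%:R : R) ^- lift ord0 i = (\sum_(i < n.+1) S%:R ^- i) / S%:R.
  by rewrite mulr_suml; apply: eq_bigr => i _; rewrite exprS invfM mulrC.
rewrite mulrDr mulr1 lerD2l mulrA ler_pdivrMr ?ltr0n // [leRHS]mulrC.
exact: le_trans h1 h2.
Qed.

End Scheme.

Lemma achievable_le_capacity (R : realType) (K S : nat) (r : R) :
  (0 < K)%N -> (0 < S)%N -> achievable K S r -> r <= (\sum_(i < K) (S%:R : R) ^- i)^-1.
Proof.
move=> K_gt0 S_gt0 [L [sc [L_gt0 sc_dist sc_correct sc_private rD_le]]].
pose k0 : 'I_K := Ordinal K_gt0.
have LT_le : L%:R * \sum_(i < K) (S%:R : R) ^- i <= download sc k0.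
  apply: le_trans (cond_answers0_le_download sc_dist k0).
  have := cond_answers_lower_bound sc_dist (n := K.-1) (k := k0) sc_correct sc_private S_gt0.
  by rewrite prednK // => /(_ (add0n K)).
have T_ge1 := sumr_exprN_ge1 K_gt0 (ler0n R S).
have [r_le0|r_gt0] := lerP r 0; first by apply: le_trans r_le0 _; rewrite invr_ge0; lra.
rewrite -[_^-1]mul1r ler_pdivlMr; last lra.
have L_gt0' : 0 < L%:R :> R by rewrite ltr0n.
rewrite -(ler_pM2l L_gt0') mulr1 mulrCA.
by apply: le_trans (rD_le k0); rewrite ler_pM2l.
Qed.

Section ShiftScheme.
Variables (R : realType) (n K : nat).
Local Notation S := n.+2.
Local Notation L := n.+1.
Local Notation msgs := {ffun 'I_K -> L.-tuple bool}.
Local Notation offsets := {ffun 'I_K -> 'I_S}.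

Definition bitv (j : 'I_S) (x : L.-tuple bool) : bool :=
  if (j : nat) is j'.+1 then tnth x (inord j') else false.

Lemma bitv_succ (i : 'I_L) x : bitv (inord i.+1) x = tnth x i.
Proof. by rewrite /bitv inordK /= ?inord_val // ltnS ltn_ord. Qed.

Definition shift_query (th : 'I_K) (s : 'I_S) (f : offsets) : offsets :=
  [ffun k => if k == th then f k + s else f k].

Definition parity_answer (s : 'I_S) (q : offsets) (W : msgs) : bool :=
  \big[addb/false]_(k < K) bitv (q k) (W k).

Definition uniform_offset : R := ((S%:R : R) ^+ K)^-1.

Definition shift_scheme : pir_scheme R K S L :=
  PirScheme R K S L offsets (fun _ => uniform_offset) offsets bool
    shift_query parity_answer.

Lemma uniform_offset_gt0 : 0 < uniform_offset.
Proof. by rewrite invr_gt0 exprn_gt0 // ltr0n. Qed.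

Lemma shift_scheme_dist : valid_dist shift_scheme.
Proof.
split => [f|]; first exact: ltW uniform_offset_gt0.
rewrite /= sumr_const card_ffun !card_ord -mulr_natr natrX mulVf //.
by rewrite expf_neq0 // pnatr_eq0.
Qed.

Lemma parity_answer_shift th s f W : parity_answer s (shift_query th s f) W =
  bitv (f th + s) (W th) (+) \big[addb/false]_(k < K | k != th) bitv (f k) (W k).
Proof.
rewrite /parity_answer (bigD1 th) //= ffunE eqxx; congr (_ (+) _).
by apply: eq_bigr => k /negbTE kth; rewrite ffunE kth.
Qed.

Definition shift_decoder (th : 'I_K) (q : {ffun 'I_S -> offsets})
    (a : {ffun 'I_S -> bool}) : L.-tuple bool :=
  [tuple a (inord i.+1 - q 0 th) (+) a (- q 0 th) | i < L].

Lemma shift_scheme_correct : correct shift_scheme.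
Proof.
move=> th; exists (shift_decoder th) => o _.
apply: eq_from_tnth => i; rewrite tnth_mktuple /Qall /Aall /A /Q !ffunE /=.
rewrite !parity_answer_shift eqxx addr0 addrC subrK subrr.
have -> : bitv 0 (o.2 th) = false by [].
by rewrite bitv_succ addFb addbK.
Qed.

Lemma sum_shift_query th s q :
  \sum_(f | shift_query th s f == q) uniform_offset = uniform_offset.
Proof.
pose f0 : offsets := [ffun k => if k == th then q k - s else q k].
rewrite (eq_bigl (pred1 f0)) ?big_pred1_eq // => f /=; rewrite /f0.
apply/eqP/eqP => [<-|->]; apply/ffunP => k; rewrite !ffunE;
  by case: (k == th); rewrite ?addrK ?subrK.
Qed.

Lemma shift_scheme_private : private shift_scheme.
Proof.
move=> s k k' q a w.
suff prob_k j : prob (P0 shift_scheme) (fun o => [&& Q shift_scheme j s o == q,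
    A shift_scheme j s o == a & o.2 == w]) = uniform_offset *
    (msg_count (fun W => (parity_answer s q W == a) && (W == w)) / 2 ^+ (K * L)).
  by rewrite !prob_k.
rewrite (eq_prob _ (E' := fun o => (shift_query j s o.1 == q) &&
    ((parity_answer s q o.2 == a) && (o.2 == w)))).
  by rewrite (prob_P0_indep (sc := shift_scheme) (fun f => shift_query j s f == q)
    (fun W => (parity_answer s q W == a) && (W == w))) sum_shift_query.
by move=> o /=; rewrite /A /Q /=; case: eqP => // ->.
Qed.

Lemma parity_answer0 s W : parity_answer s [ffun => 0] W = false.
Proof. by rewrite /parity_answer big1 // => k _; rewrite ffunE. Qed.

Lemma msg_count_parity s (q : offsets) a : q != [ffun => 0] ->
  msg_count (fun W => parity_answer s q W == a) / 2 ^+ (K * L) = 2^-1 :> R.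
Proof.
move=> q_neq0.
suff c2 : msg_count (fun W => parity_answer s q W == a) * 2 = 2 ^+ (K * L) :> R.
  rewrite -c2 invfM mulVKf //; apply: contra_eqN c2 => /eqP->.
  by rewrite mul0r eq_sym gt_eqF ?exp2_gt0.
have [k1 qk1] : exists k1, q k1 != 0.
  apply/existsP; apply: contraNT q_neq0 => /existsPn q0.
  by apply/eqP/ffunP => k; rewrite ffunE; apply/eqP/negPn/q0.
case qk1E : (q k1 : nat) => [|m]; first by move: qk1; rewrite -(inj_eq val_inj) /= qk1E.
pose tog (x : L.-tuple bool) : L.-tuple bool :=
  [tuple if i == inord m then ~~ tnth x i else tnth x i | i < L].
pose fl (W : msgs) : msgs := [ffun k => if k == k1 then tog (W k) else W k].
apply: (msg_count_balanced (fl := fl)).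
  have togK : involutive tog.
    by move=> x; apply: eq_from_tnth => i; rewrite !tnth_mktuple; case: eqP; rewrite ?negbK.
  by move=> W; apply/ffunP => k; rewrite !ffunE; case: eqP => // ->; rewrite togK.
have bitv_tog x : bitv (q k1) (tog x) = ~~ bitv (q k1) x.
  by rewrite /bitv qk1E tnth_mktuple eqxx.
move=> W; rewrite /parity_answer (bigD1 k1) // [in RHS](bigD1 k1) //= ffunE eqxx.
rewrite bitv_tog negb_add; congr (_ (+) _).
by apply: eq_bigr => k /negbTE k1k; rewrite ffunE k1k.
Qed.

Lemma shift_scheme_download th s :
  cond_entropy (P0 shift_scheme) (A shift_scheme th s) (Qall shift_scheme th) =
  1 - uniform_offset.
Proof.
have dist := shift_scheme_dist.
rewrite (cond_entropy_indep dist (Y := fun f => [ffun s => shift_query th s f])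
           (g := fun q W => parity_answer s (q s) W)) => [|o]; last by rewrite ffunE.
transitivity (\sum_o P0 shift_scheme o * (shift_query th s o.1 != [ffun => 0])%:R).
  rewrite -sumrN; apply: eq_bigr => o _; rewrite ffunE -mulrN; congr (_ * _).
  have [q0|q_neq0] := eqVneq (shift_query th s o.1) [ffun => 0].
    rewrite /A /Q /= q0 parity_answer0 /msg_count (eq_bigl predT) => [|W];
      last by rewrite parity_answer0.
    by rewrite sum_msgs_1 divff ?gt_eqF ?exp2_gt0 // /log2 ln1 mul0r oppr0.
  by rewrite msg_count_parity // log2V ?ltr0n // (log2_exp2 1) opprK.
rewrite -prob_expect (eq_prob _ (E' := fun o =>
  (shift_query th s o.1 != [ffun => 0]) && predT o.2)) => [|o]; last by rewrite andbT.
rewrite (prob_P0_indep (sc := shift_scheme) (fun f => shift_query th s f != [ffun => 0])).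
rewrite /msg_count sum_msgs_1 divff ?gt_eqF ?exp2_gt0 // mulr1.
case: dist => _; rewrite (bigID (fun f => shift_query th s f == [ffun => 0])) /=.
by rewrite sum_shift_query => <-; rewrite addrC addrK.
Qed.

End ShiftScheme.

Lemma shift_scheme_achievable (R : realType) n K : (0 < K)%N ->
  achievable K n.+2 ((\sum_(i < K) (n.+2%:R : R) ^- i)^-1).
Proof.
move=> K_gt0; exists n.+1, (shift_scheme R n K); split => //.
- exact: shift_scheme_dist.
- exact: shift_scheme_correct.
- exact: shift_scheme_private.
have S_gt0 : 0 < (n.+2%:R : R) by rewrite ltr0n.
have T_gt0 := lt_le_trans ltr01 (sumr_exprN_ge1 K_gt0 (ltW S_gt0)).
move=> th; rewrite /download (eq_bigr _ (fun s _ => shift_scheme_download _ th s)).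
rewrite sumr_const card_ord -[(_ - _) *+ _]mulr_natl /uniform_offset.
rewrite -(geometric_sum K (lt0r_neq0 S_gt0)) mulrA mulVf ?gt_eqF // mul1r.
by rewrite -natr1 addrK lexx.
Qed.

Section DownloadAll.
Variables (R : realType) (K : nat).
Local Notation msgs := {ffun 'I_K -> 1.-tuple bool}.

Definition download_all_scheme : pir_scheme R K 1 1 :=
  PirScheme R K 1 1 unit (fun _ => 1) unit msgs (fun _ _ _ => tt) (fun _ _ W => W).

Lemma download_all_dist : valid_dist download_all_scheme.
Proof. by split => [f|]; rewrite /= ?ler01 // sumr_const card_unit. Qed.

Lemma download_all_achievable : (0 < K)%N ->
  achievable K 1 ((\sum_(i < K) (1%:R : R) ^- i)^-1).
Proof.
move=> K_gt0; exists 1%N, download_all_scheme; split => //.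
- exact: download_all_dist.
- by move=> th; exists (fun _ (a : {ffun 'I_1 -> msgs}) => a ord0 th) => o _;
    rewrite /Aall /A ffunE.
move=> th; rewrite /download big_ord1.
rewrite (cond_entropy_indep download_all_dist (Y := fun f => [ffun s : 'I_1 => tt])
           (g := fun _ W => W)) //=.
rewrite (eq_bigr (fun _ => 1)) => [|i _]; last by rewrite expr1n invr1.
rewrite sumr_const card_ord.
under eq_bigr => o _ do
  rewrite /msg_count (big_pred1 o.2) // mul1r log2V ?exp2_gt0 // log2_exp2 muln1.
rewrite -mulr_suml (P0_sum1 download_all_dist) mul1r opprK.
by rewrite mulVf // pnatr_eq0 -lt0n.
Qed.
End DownloadAll.

Unset Implicit Arguments.

Theorem theorem1 (R : realType) (N U K : nat) :
  (1 <= N)%N -> (1 <= U)%N -> (1 <= K)%N ->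
  is_capacity K (N + U - 1)
    ((\sum_(i < K) ((N + U - 1)%:R : R) ^- i)^-1).
Proof.
move=> N_gt0 U_gt0 K_gt0.
have S_gt0 : (0 < N + U - 1)%N by rewrite -addnBA // addn_gt0 N_gt0.
split=> [r|e e_gt0]; first exact: achievable_le_capacity.
exists ((\sum_(i < K) ((N + U - 1)%:R : R) ^- i)^-1).
split; last by rewrite ltrBlDr ltrDl.
move: S_gt0; case: (N + U - 1)%N => [|[|n]] // _.
  exact: download_all_achievable.
exact: shift_scheme_achievable.
Qed.
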